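(* Let $A$ be a $\mathbb{C}$-algebra, $Q$ a tropical field, and $X\subset A$ a generating set with presentation $0\to I\to\mathbb{C}[X]\to A\to0$ ($x\mapsto x$). Then the map $\pi_X:\mathbb{V}_Q(A)\to Q^X$, $v\mapsto(v(x))_{x\in X}$, takes values in the tropical variety $\operatorname{tr}_Q(I)$. Moreover the maps $\pi_X$ induce a bijection $\mathbb{V}_Q(A)\cong\varprojlim_{X}\operatorname{tr}_Q(I_X)$, the inverse limit over generating sets $X\subset A$ (ordered by inclusion, with coordinate projections as transition maps).
   Context: A tropical field $Q$ is a totally ordered abelian group (operation written $+$, tropical product $\otimes=+$, tropical sum $\oplus=\max$) with an adjoined least element $-\infty$. A valuation $v:A\to Q$ satisfies $v(ab)=v(a)+v(b)$, $v(a+b)\le\max(v(a),v(b))$, $v(0)=-\infty$, $v(c)=0$ for $c\in\mathbb{C}^\times$; $\mathbb{V}_Q(A)$ denotes the set of these. For $f=\sum_i C_i\vec x^{\vec m_i}\in\mathbb{C}[X]$ with $C_i\ne0$ (coefficients given the trivial valuation), its tropicalization is $T(f)(\vec q)=\max_i\langle\vec m_i,\vec q\rangle$, and $\operatorname{tr}(T(f))\subset Q^X$ is the set of $\vec q$ where this maximum is attained by at least two monomials; $\operatorname{tr}_Q(I)=\bigcap_{f\in I}\operatorname{tr}(T(f))$. *)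

From HB Require Import structures.
From mathcomp Require Import all_boot all_order all_algebra.
Set Implicit Arguments. Unset Strict Implicit. Unset Printing Implicit Defensive.
Import GRing.Theory.
Local Open Scope ring_scope.

Definition ordered_group (Q : zmodType) (leQ : rel Q) : Prop :=
  [/\ reflexive leQ, antisymmetric leQ, transitive leQ, total leQ &
      forall x y z : Q, leQ x y -> leQ (x + z) (y + z)].

(* The tropical field Q ∪ {-oo}: [None] is -oo, [Some a] is a ∈ Q. *)
Section Trop.
Variables (Q : zmodType) (leQ : rel Q).

Definition tle (a b : option Q) : bool :=
  match a, b with
  | None, _ => true
  | Some _, None => false
  | Some x, Some y => leQ x y
  end.

Definition tmax (a b : option Q) : option Q := if tle a b then b else a.

Definition tmul (a b : option Q) : option Q :=
  match a, b with
  | Some x, Some y => Some (x + y)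
  | _, _ => None
  end.

Definition tpow (a : option Q) (n : nat) : option Q :=
  match a with
  | Some x => Some (x *+ n)
  | None => if n == 0%N then Some 0 else None
  end.

Definition tmono (n : nat) (e : 'I_n -> nat) (q : 'I_n -> option Q) : option Q :=
  \big[tmul/Some 0]_(i < n) tpow (q i) (e i).

Definition tpoly (n k : nat) (e : 'I_k -> 'I_n -> nat) (q : 'I_n -> option Q)
  : option Q := \big[tmax/None]_(j < k) tmono (e j) q.

Definition in_trop_hyp (n k : nat) (e : 'I_k -> 'I_n -> nat) (q : 'I_n -> option Q)
  : Prop :=
  tpoly e q = None \/
  exists j1 j2 : 'I_k, j1 != j2 /\
     tmono (e j1) q = tpoly e q /\ tmono (e j2) q = tpoly e q.
End Trop.

Section Alg.
Variables (K : fieldType) (A : comAlgType K).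

(* The polynomial sum_j c_j x^{e_j} evaluated in A, where x : 'I_n -> A lists
   the variables occurring in it. *)
Definition peval (n k : nat) (x : 'I_n -> A) (c : 'I_k -> K)
  (e : 'I_k -> 'I_n -> nat) : A :=
  \sum_(j < k) c j *: \prod_(i < n) x i ^+ e j i.

Definition generating (X : A -> Prop) : Prop :=
  forall a : A, exists (n k : nat) (x : 'I_n -> A) (c : 'I_k -> K)
    (e : 'I_k -> 'I_n -> nat), (forall i, X (x i)) /\ a = peval x c e.

(* f ∈ I_X = ker(K[X] -> A), written in reduced form: distinct variables
   x_0..x_{n-1} of X, pairwise distinct exponent vectors, nonzero
   coefficients (f = sum_j c_j x^{e_j}).  Every element of K[X] has such a
   representation, unique up to reindexing. *)
Definition ideal_elt (X : A -> Prop) (n k : nat) (x : 'I_n -> A)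
  (c : 'I_k -> K) (e : 'I_k -> 'I_n -> nat) : Prop :=
  [/\ forall i, X (x i),
      injective x,
      forall j1 j2, (forall i, e j1 i = e j2 i) -> j1 = j2,
      forall j, c j != 0 &
      peval x c e = 0].

(* q ∈ Q^X (given as a function on A, only its values on X matter)
   lies in tr_Q(I_X) = ∩_{f ∈ I_X} tr(T(f)). *)
Definition in_trop_var (Q : zmodType) (leQ : rel Q) (X : A -> Prop)
  (q : A -> option Q) : Prop :=
  forall (n k : nat) (x : 'I_n -> A) (c : 'I_k -> K) (e : 'I_k -> 'I_n -> nat),
    ideal_elt X x c e -> in_trop_hyp leQ e (fun i => q (x i)).

Definition valuation (Q : zmodType) (leQ : rel Q) (v : A -> option Q) : Prop :=
  [/\ forall a b, v (a * b) = tmul (v a) (v b),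
      forall a b, tle leQ (v (a + b)) (tmax leQ (v a) (v b)),
      v 0 = None &
      forall c : K, c != 0 -> v (c%:A) = Some 0].
End Alg.

From Pilot Require Import Defs.
From HB Require Import structures.
From mathcomp Require Import all_boot all_order all_algebra.
Set Implicit Arguments. Unset Strict Implicit.
Import GRing.Theory.
Local Open Scope ring_scope.

(* 1. The order on Q ∪ {-oo}: max, its upper bounds, and the fact that in
      tr(T(f)) every monomial is dominated by the maximum of the others.
   2. A valuation v lies in tr_Q(I_X): if one monomial c_j x^{e_j} of a
      relation f ∈ I_X had strictly largest valuation M, the remaining terms
      would sum to -c_j x^{e_j} with valuation < M (strict ultrametric
      inequality), a contradiction.
   3. Conversely a point v ∈ tr_Q(I_A) for the generating set X = A is a
      valuation: v(0) = -oo, v(ab) = v(a) + v(b), v(a+b) <= max(v a, v b)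
      and v(c) = 0 are read off the elements x (at x := 0), z - xy,
      z - x - y and x - c of I_A, in distinct variables x, y, z of A
      (degenerate coincidences of variables are handled separately).
      A general lemma turns any such relation with distinct exponents and
      nonzero coefficients into the inequality of section 1.
   The theorem follows: pi_X(v) = v|_X lands in tr_Q(I_X) by 2, v is
   determined by its restriction to the generating set A, and a compatible
   family is the restriction of its A-component, a valuation by 3. *)

Section TropicalOrder.
Variables (Q : zmodType) (leQ : rel Q).
Hypothesis HQ : ordered_group leQ.

Local Notation tle := (tle leQ).
Local Notation tmax := (tmax leQ).

Lemma tmul0l (y : option Q) : tmul (Some 0) y = y.
Proof. by case: y => //= x; rewrite add0r. Qed.

Lemma tmul0r (y : option Q) : tmul y (Some 0) = y.
Proof. by case: y => //= x; rewrite addr0. Qed.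

Lemma tpow0 (y : option Q) : tpow y 0 = Some 0.
Proof. by case: y. Qed.

Lemma tpow1 (y : option Q) : tpow y 1 = y.
Proof. by case: y => //= x; rewrite mulr1n. Qed.

Lemma tpow2 (y : option Q) : tpow y 2 = tmul y y.
Proof. by case: y => //= x; rewrite mulr2n. Qed.

Lemma tle_refl a : tle a a.
Proof. by case: HQ => refl _ _ _ _; case: a => //= x; apply: refl. Qed.

Lemma tle_trans a b c : tle a b -> tle b c -> tle a c.
Proof.
case: HQ => _ _ trans _ _.
by case: a => [x|] //; case: b => [y|] //; case: c => [z|] //=; apply: trans.
Qed.

Lemma tle_anti a b : tle a b -> tle b a -> a = b.
Proof.
case: HQ => _ anti _ _ _; case: a => [x|] //; case: b => [y|] //= h1 h2.
by rewrite (anti x y) // h1 h2.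
Qed.

Lemma tle_None a : tle a None -> a = None.
Proof. by case: a. Qed.

Lemma tmax_cases a b : tmax a b = a \/ tmax a b = b.
Proof. by rewrite /Defs.tmax; case: ifP; auto. Qed.

Lemma tmax_None a : tmax a None = a.
Proof. by case: a. Qed.

Lemma tle_maxl a b : tle a (tmax a b).
Proof. by rewrite /Defs.tmax; case: ifP => // _; apply: tle_refl. Qed.

Lemma tle_maxr a b : tle b (tmax a b).
Proof.
rewrite /Defs.tmax; case: ifP => [_|nab]; first exact: tle_refl.
case: HQ => _ _ _ total _.
by case: a b nab => [x|] [y|] //=; case/orP: (total x y) => ->.
Qed.

Lemma tle_big (I : finType) (F : I -> option Q) j :
  tle (F j) (\big[tmax/None]_(i : I) F i).
Proof.
rewrite unlock; elim: (index_enum I) (mem_index_enum j) => // i r IH.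
rewrite inE /= => /orP[/eqP-> | /IH]; first exact: tle_maxl.
by move/tle_trans; apply; apply: tle_maxr.
Qed.

Lemma big_tmax_attained (I : finType) (F : I -> option Q) :
  \big[tmax/None]_(i : I) F i = None \/
  exists j, F j = \big[tmax/None]_(i : I) F i.
Proof.
apply: (big_ind (fun m => m = None \/ exists j, F j = m)); first by left.
  by move=> a b ha hb; case: (tmax_cases a b) => ->.
by move=> i _; right; exists i.
Qed.

Definition tlt (a b : option Q) : bool := tle a b && (a != b).

Lemma tle_tlt_trans a b c : tle a b -> tlt b c -> tlt a c.
Proof.
move=> ab /andP[bc nbc]; rewrite /tlt (tle_trans ab bc); apply/eqP => ac.
by move/eqP: nbc; apply; apply: tle_anti; rewrite // -ac.
Qed.

Lemma tmax_tlt a b c : tlt a c -> tlt b c -> tlt (tmax a b) c.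
Proof. by move=> ac bc; case: (tmax_cases a b) => ->. Qed.

(* In tr(T(f)) the first monomial is at most the maximum of the other ones
   (the monomials of f may be listed in any order). *)
Lemma in_trop_hyp_dominated n k (e : 'I_k.+1 -> 'I_n -> nat) (q : 'I_n -> option Q) :
  in_trop_hyp leQ e q ->
  tle (tmono (e ord0) q) (\big[tmax/None]_(i < k) tmono (e (lift ord0 i)) q).
Proof.
have le_tpoly j : tle (tmono (e j) q) (tpoly leQ e q) by apply: tle_big.
case=> [tpoly_None | [j1 [j2 [j12 [max1 max2]]]]].
  by move: (le_tpoly ord0); rewrite tpoly_None => /tle_None ->.
have [j [nj0 maxj]] : exists j, j != ord0 /\ tmono (e j) q = tpoly leQ e q.
  by case: (eqVneq j1 ord0) => [E|]; [exists j2; rewrite -E eq_sym | exists j1].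
case: (unliftP ord0 j) nj0 maxj => [i -> _ maxi|->]; last by rewrite eqxx.
by apply: tle_trans (le_tpoly ord0) _; rewrite -maxi; apply: (tle_big (fun i => _)).
Qed.

End TropicalOrder.

Section ValuationsAreTropical.
Variables (K : fieldType) (A : comAlgType K) (Q : zmodType) (leQ : rel Q).
Hypothesis HQ : ordered_group leQ.
Variable v : A -> option Q.
Hypothesis Hv : valuation leQ v.

Lemma valuation_scale (c : K) m : c != 0 -> v (c *: m) = v m.
Proof.
by case: Hv => vM _ _ vC nc; rewrite -mulr_algl vM vC // tmul0l.
Qed.

Lemma valuation1 : v 1 = Some 0.
Proof. by case: Hv => _ _ _ vC; rewrite -(scale1r 1) vC ?oner_neq0. Qed.

Lemma valuationN a : v (- a) = v a.
Proof. by rewrite -scaleN1r valuation_scale // oppr_eq0 oner_neq0. Qed.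

Lemma valuation_exp a n : v (a ^+ n) = tpow (v a) n.
Proof.
elim: n => [|n IH]; first by rewrite expr0 valuation1 tpow0.
case: Hv => vM _ _ _; rewrite exprS vM IH.
by case: (v a) => //= x; rewrite mulrS.
Qed.

Lemma valuation_term n (x : 'I_n -> A) (e : 'I_n -> nat) (c : K) :
  c != 0 -> v (c *: \prod_(i < n) x i ^+ e i) = tmono e (fun i => v (x i)).
Proof.
case: Hv => vM _ _ _ nc; rewrite valuation_scale // (big_morph v vM valuation1).
by apply: eq_bigr => i _; apply: valuation_exp.
Qed.

Lemma valuation_sum_tlt (I : Type) (r : seq I) (P : pred I) (F : I -> A) M :
  M != None -> (forall i, P i -> tlt leQ (v (F i)) M) ->
  tlt leQ (v (\sum_(i <- r | P i) F i)) M.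
Proof.
case: Hv => _ vD v0 _ nM ltF.
apply: (big_ind (fun s => tlt leQ (v s) M)) => //; first by rewrite v0 /tlt eq_sym nM.
by move=> a b ltA ltB; apply: tle_tlt_trans (vD a b) (tmax_tlt ltA ltB).
Qed.

Lemma valuation_in_trop_var (X : A -> Prop) : in_trop_var leQ X v.
Proof.
move=> n k x c e [_ _ _ nc sum0].
set t := fun j => tmono (e j) (fun i => v (x i)).
have vterm j : v (c j *: \prod_(i < n) x i ^+ e j i) = t j by apply: valuation_term.
case: (big_tmax_attained leQ t) => [tpoly_None | [j0 maxj0]]; first by left.
set M := \big[tmax leQ/None]_(j < k) t j in maxj0.
change (M = None \/ exists j1 j2, j1 != j2 /\ t j1 = M /\ t j2 = M).
case: (eqVneq M None) => [|nM]; first by left.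
case: (boolP [exists j, (j != j0) && (t j == M)]) => [/existsP[j /andP[nj /eqP tj]]|].
  by right; exists j0, j; rewrite eq_sym.
rewrite negb_exists => /forallP others_lt; exfalso.
have lt_rest : tlt leQ (v (\sum_(j < k | j != j0) c j *: \prod_(i < n) x i ^+ e j i)) M.
  apply: valuation_sum_tlt => // j nj; rewrite vterm /tlt (tle_big HQ t).
  by move: (others_lt j); rewrite nj.
move: sum0 lt_rest; rewrite /peval (bigD1 j0) //= => /eqP; rewrite addr_eq0 => /eqP term_j0.
by rewrite -valuationN -term_j0 vterm -maxj0 /tlt eqxx andbF.
Qed.

End ValuationsAreTropical.

Section TropicalPointsAreValuations.
Variables (K : fieldType) (A : comAlgType K) (Q : zmodType) (leQ : rel Q).
Hypothesis HQ : ordered_group leQ.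
Variable v : A -> option Q.
Hypothesis Hv : in_trop_var leQ (fun _ : A => True) v.

Definition monomial (s : seq A) (e : seq nat) : A :=
  \prod_(i < size s) s`_i ^+ nth 0%N e i.

Definition trop_monomial (s : seq A) (e : seq nat) : option Q :=
  tmono (fun i : 'I_(size s) => nth 0%N e i) (fun i => v s`_i).

Lemma monomial_nil : monomial [::] [::] = 1.
Proof. by rewrite /monomial big_ord0. Qed.

Lemma monomial_cons a s k e : monomial (a :: s) (k :: e) = a ^+ k * monomial s e.
Proof. by rewrite /monomial big_ord_recl. Qed.

Lemma trop_monomial_nil : trop_monomial [::] [::] = Some 0.
Proof. by rewrite /trop_monomial /tmono big_ord0. Qed.

Lemma trop_monomial_cons a s k e :
  trop_monomial (a :: s) (k :: e) = tmul (tpow (v a) k) (trop_monomial s e).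
Proof. by rewrite /trop_monomial /tmono big_ord_recl. Qed.

Definition monomialE := (monomial_cons, monomial_nil, expr0, expr1, mulr1, mul1r).
Definition trop_monomialE :=
  (trop_monomial_cons, trop_monomial_nil, tpow0, tpow1, tpow2, tmul0l, tmul0r).

Lemma relation_dominated (s : seq A) (e0 : seq nat) (es : seq (seq nat))
    (c0 : K) (cs : seq K) :
  uniq s -> uniq (e0 :: es) -> all (fun e => size e == size s) (e0 :: es) ->
  all (fun c => c != 0) (c0 :: cs) -> size cs = size es ->
  c0 *: monomial s e0 + \sum_(j < size es) cs`_j *: monomial s (nth [::] es j) = 0 ->
  tle leQ (trop_monomial s e0)
    (\big[tmax leQ/None]_(j < size es) trop_monomial s (nth [::] es j)).
Proof.
move=> uniq_s uniq_e /all_nthP size_e /all_nthP nz_c size_cs rel.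
pose x (i : 'I_(size s)) := s`_i.
pose c (j : 'I_(size es).+1) := nth 0 (c0 :: cs) j.
pose e (j : 'I_(size es).+1) (i : 'I_(size s)) := nth 0%N (nth [::] (e0 :: es) j) i.
suff: ideal_elt (fun _ => True) x c e by move/Hv/in_trop_hyp_dominated; apply.
split => //.
- by move=> i1 i2 /eqP; rewrite nth_uniq // => /eqP; apply: val_inj.
- move=> j1 j2 e12; apply/val_inj/eqP.
  rewrite -(@nth_uniq _ [::] (e0 :: es) j1 j2 (ltn_ord j1) (ltn_ord j2) uniq_e).
  have size_ej (j : 'I_(size es).+1) : size (nth [::] (e0 :: es) j) = size s.
    by apply/eqP/size_e.
  apply/eqP/(@eq_from_nth _ 0%N) => [|i]; first by rewrite !size_ej.
  by rewrite size_ej => lt_i; apply: (e12 (Ordinal lt_i)).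
- by move=> j; apply: nz_c; rewrite /= size_cs.
- by rewrite /peval big_ord_recl.
Qed.

Lemma trop_monomial_zero (s : seq A) (e : seq nat) (c : K) :
  uniq s -> size e = size s -> c != 0 -> c *: monomial s e = 0 ->
  trop_monomial s e = None.
Proof.
move=> uniq_s size_e nc rel.
have := @relation_dominated s e [::] c [::] uniq_s isT.
rewrite /= size_e eqxx nc !big_ord0 addr0 => /(_ isT isT erefl rel).
exact: tle_None.
Qed.

Lemma trop_binomial (s : seq A) (e0 e1 : seq nat) (c0 c1 : K) :
  uniq s -> e0 != e1 -> all (fun e => size e == size s) [:: e0; e1] ->
  c0 != 0 -> c1 != 0 -> c0 *: monomial s e0 + c1 *: monomial s e1 = 0 ->
  trop_monomial s e0 = trop_monomial s e1.
Proof.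
move=> uniq_s ne01 sizes nc0 nc1 rel.
have dominated (f0 f1 : seq nat) (d0 d1 : K) :
    f0 != f1 -> all (fun e => size e == size s) [:: f0; f1] -> d0 != 0 -> d1 != 0 ->
    d0 *: monomial s f0 + d1 *: monomial s f1 = 0 ->
    tle leQ (trop_monomial s f0) (trop_monomial s f1).
  move=> nf01 sizesf nd0 nd1 relf.
  have := @relation_dominated s f0 [:: f1] d0 [:: d1] uniq_s.
  rewrite /= inE nf01 nd0 nd1 big_ord1 big_ord_recl big_ord0 tmax_None.
  by apply.
apply: (tle_anti HQ); first exact: (dominated _ _ c0 c1).
apply: (dominated _ _ c1 c0) => //; first by rewrite eq_sym.
  by move: sizes => /= /and3P[-> ->].
by rewrite addrC.
Qed.

Lemma trop_trinomial (s : seq A) (e0 e1 e2 : seq nat) (c0 c1 c2 : K) :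
  uniq s -> uniq [:: e0; e1; e2] -> all (fun e => size e == size s) [:: e0; e1; e2] ->
  c0 != 0 -> c1 != 0 -> c2 != 0 ->
  c0 *: monomial s e0 + (c1 *: monomial s e1 + c2 *: monomial s e2) = 0 ->
  tle leQ (trop_monomial s e0) (tmax leQ (trop_monomial s e1) (trop_monomial s e2)).
Proof.
move=> uniq_s uniq_e sizes nc0 nc1 nc2 rel.
have := @relation_dominated s e0 [:: e1; e2] c0 [:: c1; c2] uniq_s uniq_e sizes.
rewrite /= nc0 nc1 nc2 !big_ord_recl !big_ord0 addr0 tmax_None.
by apply.
Qed.

Lemma trop_monomial_eq (s : seq A) (e0 e1 : seq nat) :
  uniq s -> e0 != e1 -> all (fun e => size e == size s) [:: e0; e1] ->
  monomial s e0 = monomial s e1 -> trop_monomial s e0 = trop_monomial s e1.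
Proof.
move=> uniq_s ne01 sizes eq01; apply: (trop_binomial (c0 := 1) (c1 := -1)) => //.
- exact: oner_neq0.
- by rewrite oppr_eq0 oner_neq0.
- by rewrite eq01 scale1r scaleN1r subrr.
Qed.

Lemma point_zero : v 0 = None.
Proof.
have := @trop_monomial_zero [:: 0] [:: 1%N] 1 isT erefl (oner_neq0 K).
by rewrite !monomialE scale1r !trop_monomialE; apply.
Qed.

Lemma point_scalar (c : K) : c != 0 -> v c%:A = Some 0.
Proof.
move=> nc; have := @trop_binomial [:: c%:A] [:: 1%N] [:: 0%N] 1 (- c) isT isT isT.
rewrite !trop_monomialE oppr_eq0 nc; apply=> //; first exact: oner_neq0.
by rewrite !monomialE scale1r scaleNr subrr.
Qed.

(* Multiplicativity comes from z = xy with z := ab, x := a, y := b; when two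
   of these elements coincide the relation is rewritten in fewer variables. *)
Lemma point_square (a : A) : v (a * a) = tmul (v a) (v a).
Proof.
have [aa_a | aa_neq_a] := eqVneq (a * a) a.
  have := @trop_monomial_eq [:: a] [:: 2%N] [:: 1%N] isT isT isT.
  by rewrite !monomialE !trop_monomialE expr2 aa_a => /(_ erefl) ->.
have := @trop_monomial_eq [:: a * a; a] [:: 1; 0]%N [:: 0; 2]%N.
by rewrite !monomialE !trop_monomialE expr2; apply; rewrite //= inE aa_neq_a.
Qed.

Lemma point_mul (a b : A) : v (a * b) = tmul (v a) (v b).
Proof.
have [<- | a_neq_b] := eqVneq a b; first exact: point_square.
have uniq_ab : uniq [:: a; b] by rewrite /= inE a_neq_b.
have [ab_a | ab_neq_a] := eqVneq (a * b) a.
  have := @trop_monomial_eq [:: a; b] [:: 1; 1]%N [:: 1; 0]%N uniq_ab isT isT.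
  by rewrite !monomialE !trop_monomialE ab_a => /(_ erefl) ->.
have [ab_b | ab_neq_b] := eqVneq (a * b) b.
  have := @trop_monomial_eq [:: a; b] [:: 1; 1]%N [:: 0; 1]%N uniq_ab isT isT.
  by rewrite !monomialE !trop_monomialE ab_b => /(_ erefl) ->.
have := @trop_monomial_eq [:: a * b; a; b] [:: 1; 0; 0]%N [:: 0; 1; 1]%N.
rewrite !monomialE !trop_monomialE; apply => //.
by rewrite /= !inE negb_or ab_neq_a ab_neq_b a_neq_b.
Qed.

(* The ultrametric inequality comes from z = x + y, or z = 2x when a = b. *)
Lemma point_add (a b : A) : tle leQ (v (a + b)) (tmax leQ (v a) (v b)).
Proof.
have [-> | ab_neq_a] := eqVneq (a + b) a; first exact: tle_maxl.
have [-> | ab_neq_b] := eqVneq (a + b) b; first exact: tle_maxr.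
have [-> | ab_neq0] := eqVneq (a + b) 0; first by rewrite point_zero.
have [eq_ab | a_neq_b] := eqVneq a b.
  subst b; have n2 : (2%:R : K) != 0.
    by apply: contra ab_neq0 => /eqP n2; rewrite -mulr2n -scaler_nat n2 scale0r.
  have := @trop_binomial [:: a + a; a] [:: 1; 0]%N [:: 0; 1]%N 1 (- 2%:R).
  rewrite !monomialE !trop_monomialE => -> //; first exact: tle_maxl.
  - by rewrite /= inE ab_neq_a.
  - exact: oner_neq0.
  - by rewrite oppr_eq0.
  - by rewrite scale1r scaleNr scaler_nat mulr2n subrr.
have := @trop_trinomial [:: a + b; a; b] [:: 1; 0; 0]%N [:: 0; 1; 0]%N [:: 0; 0; 1]%N
  1 (-1) (-1).
rewrite !monomialE !trop_monomialE oppr_eq0 oner_neq0; apply => //.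
- by rewrite /= !inE negb_or ab_neq_a ab_neq_b a_neq_b.
- by rewrite !scaleN1r scale1r -opprD subrr.
Qed.

Lemma point_valuation : valuation leQ v.
Proof.
split; [exact: point_mul | exact: point_add | exact: point_zero | exact: point_scalar].
Qed.

End TropicalPointsAreValuations.

Lemma generating_all (K : fieldType) (A : comAlgType K) : generating (fun _ : A => True).
Proof.
move=> a; exists 1%N, 1%N, (fun _ => a), (fun _ => 1), (fun _ _ => 1%N); split => //.
by rewrite /peval !big_ord1 scale1r expr1.
Qed.

Unset Implicit Arguments.
Set Strict Implicit.

(* Families q : (A -> Prop) -> (A -> option Q) play the role of elements of
   prod_X Q^X (q X is the X-component, only relevant on X). *)
Theorem theorem2p1 (K : fieldType) (A : comAlgType K)
  (Q : zmodType) (leQ : rel Q) (HQ : ordered_group leQ) :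
  (* pi_X takes values in tr_Q(I_X) *)
  (forall (v : A -> option Q) (X : A -> Prop),
     valuation leQ v -> generating X -> in_trop_var leQ X v)
  /\
  (* the induced map V_Q(A) -> lim_X tr_Q(I_X) is injective *)
  (forall v w : A -> option Q,
     valuation leQ v -> valuation leQ w ->
     (forall X : A -> Prop, generating X -> forall x, X x -> v x = w x) ->
     forall a, v a = w a)
  /\
  (* ... and surjective onto the inverse limit *)
  (forall q : (A -> Prop) -> A -> option Q,
     (forall X : A -> Prop, generating X -> in_trop_var leQ X (q X)) ->
     (forall X Y : A -> Prop, generating X -> generating Y ->
        (forall a, X a -> Y a) -> forall x, X x -> q Y x = q X x) ->
     exists v : A -> option Q, valuation leQ v /\
       forall X : A -> Prop, generating X -> forall x, X x -> v x = q X x).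
Proof.
have genA := @generating_all K A.
split; [|split].
- by move=> v X Hv _; apply: valuation_in_trop_var.
- by move=> v w _ _ agree a; apply: agree genA a I.
- move=> q q_trop q_compat; exists (q (fun _ => True)); split.
    by apply: (point_valuation HQ); apply: q_trop.
  by move=> X genX x Xx; apply: q_compat genX genA (fun _ _ => I) x Xx.
Qed.
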